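(* Let $c\in\mathbb{C}^n$, let $\rho(z)=z+c$ be the corresponding translation of $\mathbb{C}^{n}$, let $d\geq 1$ be an integer, and let $V\subseteq\mathcal{O}_{d}(\mathbb{C}^{n})$ be a complex linear subspace such that $g\circ\rho=g$ for every $g\in V$. If \[ \dim V \geq \dim\mathcal{O}_{d}(\mathbb{C}^{n})-\binom{n+d-1}{d-1}+1, \] then $c=0$.
   Context: $\mathcal{O}_d(\mathbb{C}^n)$ denotes the space of holomorphic functions $f$ on $\mathbb{C}^n$ with $|f(z)|\leq C(1+|z|)^d$ for some constant $C$; equivalently, the space of polynomials on $\mathbb{C}^n$ of degree at most $d$, which has dimension $\binom{n+d}{d}$. *)

From HB Require Import structures.
From mathcomp Require Import all_boot all_order all_algebra.
From mathcomp Require Import Rstruct.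
From mathcomp.real_closed Require Import complex.
From mathcomp.multinomials Require Import mpoly.
Set Implicit Arguments. Unset Strict Implicit. Unset Printing Implicit Defensive.
Import GRing.Theory Num.Theory.
Local Open Scope ring_scope.

Definition CC : Type := (Rdefinitions.R)[i].

(* O_d(C^n): polynomials on C^n of (total) degree at most d.
   msize p = 1 + total degree of p (and 0 for p = 0). *)
Definition Od (n d : nat) (p : {mpoly CC[n]}) : Prop := (msize p <= d.+1)%N.

Definition is_subspace (n : nat) (V : {mpoly CC[n]} -> Prop) : Prop :=
  V 0 /\ forall (a : CC) (u v : {mpoly CC[n]}), V u -> V v -> V (a *: u + v).

Definition lin_indep (n k : nat) (g : 'I_k -> {mpoly CC[n]}) : Prop :=
  forall a : 'I_k -> CC, \sum_(i < k) a i *: g i = 0 -> forall i, a i = 0.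

Definition dim_ge (n : nat) (V : {mpoly CC[n]} -> Prop) (k : nat) : Prop :=
  exists g : 'I_k -> {mpoly CC[n]}, (forall i, V (g i)) /\ lin_indep g.

Definition transl (n : nat) (c : 'I_n -> CC) (z : 'I_n -> CC) : 'I_n -> CC :=
  fun i => z i + c i.

Definition transl_invariant (n : nat) (c : 'I_n -> CC) (g : {mpoly CC[n]}) : Prop :=
  forall z : 'I_n -> CC, g.@[transl c z] = g.@[z].

(* If c_i <> 0, a polynomial g with g o rho = g is constant along every line
   z + t c (a polynomial in t taking the same value at every t in N), so g is
   determined by its restriction to the hyperplane z_i = 0: a nonzero invariant
   polynomial has a nonzero coefficient on some monomial free of X_i.  There are
   only C(n-1+d, d) such monomials of degree <= d, while
   dim V >= C(n+d, d) - C(n+d-1, d-1) + 1 = C(n-1+d, d) + 1, so some nontrivial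
   combination of independent elements of V kills all these coefficients, hence
   vanishes, contradicting independence. *)

From HB Require Import structures.
From mathcomp Require Import all_boot all_order all_algebra.
From mathcomp Require Import Rstruct.
From mathcomp.real_closed Require Import complex.
From mathcomp.multinomials Require Import mpoly.
Import GRing.Theory Num.Theory.
Set Implicit Arguments.
Unset Strict Implicit.
Unset Printing Implicit Defensive.
Local Open Scope ring_scope.

Section PolynomialFunctions.
Variable R : numDomainType.

Lemma poly_eq0_roots_natr (p : {poly R}) : (forall k : nat, p.[k%:R] = 0) -> p = 0.
Proof.
move=> p_natr0; apply: (@roots_geq_poly_eq0 _ p [seq k%:R | k <- iota 0 (size p)]).
- by apply/allP => _ /mapP[k _ ->]; apply/rootP.
- by rewrite map_inj_uniq ?iota_uniq // => k l /eqP; rewrite eqr_nat => /eqP.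
- by rewrite size_map size_iota.
Qed.

Lemma sum_powers_eq0 (I : Type) (s : seq I) (b : I -> R) (deg : I -> nat) :
    (forall x : R, \sum_(i <- s) b i * x ^+ deg i = 0) ->
  forall e, \sum_(i <- s | deg i == e) b i = 0.
Proof.
move=> s0 e; pose p : {poly R} := \sum_(i <- s) b i *: 'X^(deg i).
have /polyP/(_ e) : p = 0.
  apply: poly_eq0_roots_natr => k; rewrite -(s0 k%:R) horner_sum.
  by apply: eq_bigr => i _; rewrite hornerZ hornerXn.
rewrite coef0 /p coef_sum => pe0; rewrite -[RHS]pe0 big_mkcond /=.
apply: eq_bigr => i _.
by rewrite coefZ coefXn eq_sym; case: eqP; rewrite ?mulr1 ?mulr0.
Qed.

Lemma mnm_sum_eval_eq0 n k (s : seq 'X_{1..n}) (a : 'X_{1..n} -> R) :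
    (k <= n)%N -> uniq s ->
    (forall m m', m \in s -> m' \in s ->
       forall i : 'I_n, (k <= i)%N -> m i = m' i) ->
    (forall v : 'I_n -> R,
       \sum_(m <- s) a m * \prod_(i < n | (i < k)%N) v i ^+ m i = 0) ->
  {in s, forall m, a m = 0}.
Proof.
(* The inductive step splits s by the exponent of variable k, which it reads off
   as the degree in v k of a univariate polynomial. *)
elim: k s => [|k IHk] s kn s_uniq s_agree s0 m ms.
  rewrite -[RHS](s0 (fun=> 0)) (bigD1_seq m) //= big_pred0 // mulr1.
  rewrite big_seq_cond big1 ?addr0 // => m' /andP[m's /eqP[]].
  by apply/mnmP => i; apply: s_agree.
pose ko : 'I_n := Ordinal kn.
pose se := [seq m' <- s | (m' : 'X_{1..n}) ko == m ko].
have mse : m \in se by rewrite mem_filter eqxx.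
apply: (IHk se (ltnW kn) (filter_uniq _ s_uniq) _ _ m mse).
  move=> m1 m2; rewrite !mem_filter => /andP[/eqP e1 m1s] /andP[/eqP e2 m2s] i.
  rewrite leq_eqVlt => /orP[/eqP ki|]; last exact: s_agree.
  have -> : i = ko by apply: val_inj; rewrite /= ki.
  by rewrite e1 e2.
move=> v; rewrite big_filter.
pose b m' := a m' * \prod_(i < n | (i < k)%N) v i ^+ m' i.
apply: (@sum_powers_eq0 _ s b (fun m' : 'X_{1..n} => m' ko)) => x.
rewrite -[RHS](s0 (fun i => if i == ko then x else v i)); apply: eq_bigr => m' _.
rewrite /b -mulrA [in RHS](bigD1 ko) //= eqxx; congr (_ * _).
rewrite mulrC; congr (_ * _).
apply: eq_big => [i|i ik]; first by rewrite ltn_neqAle ltnS andbC -val_eqE.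
by rewrite ifN // -val_eqE /= neq_ltn ik.
Qed.

Lemma mpoly_eval_eq0 n (p : {mpoly R[n]}) : (forall v, p.@[v] = 0) -> p = 0.
Proof.
move=> p0; apply/mpolyP => m; rewrite mcoeff0.
have [ms|] := boolP (m \in msupp p); last exact: memN_msupp_eq0.
apply: (@mnm_sum_eval_eq0 n n _ (fun m => p@_m) (leqnn n) (msupp_uniq p) _ _ m ms).
  by move=> m1 m2 _ _ i; rewrite leqNgt ltn_ord.
move=> v; rewrite -[RHS](p0 v) mevalE; apply: eq_bigr => m' _.
by congr (_ * _); apply: eq_bigl => i; rewrite ltn_ord.
Qed.

End PolynomialFunctions.

Section TranslationInvariance.
Variables (R : numFieldType) (n : nat) (c : 'I_n -> R) (g : {mpoly R[n]}).
Hypothesis g_inv : forall z, g.@[fun i => z i + c i] = g.@[z].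

Lemma meval_line_invariant z t : g.@[fun i => z i + t * c i] = g.@[z].
Proof.
pose p : {poly R} :=
  \sum_(m <- msupp g) g@_m *: \prod_(i < n) ((z i)%:P + c i *: 'X) ^+ m i.
have p_eval u : p.[u] = g.@[fun i => z i + u * c i].
  rewrite mevalE horner_sum; apply: eq_bigr => m _.
  rewrite hornerZ horner_prod; congr (_ * _); apply: eq_bigr => i _.
  by rewrite horner_exp hornerD hornerC hornerZ hornerX mulrC.
have g_natr (k : nat) : g.@[fun i => z i + k%:R * c i] = g.@[z].
  elim: k => [|k IHk]; first by apply: meval_eq => i; rewrite mul0r addr0.
  rewrite -[RHS]IHk -[RHS]g_inv; apply: meval_eq => i.
  by rewrite mulrSr mulrDl mul1r addrA.
have /eqP : p - (g.@[z])%:P = 0.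
  apply: poly_eq0_roots_natr => k.
  by rewrite hornerD hornerN hornerC p_eval g_natr subrr.
by rewrite subr_eq0 => /eqP p_const; rewrite -p_eval p_const hornerC.
Qed.

Lemma translation_invariant_eq0 (j : 'I_n) : c j != 0 ->
  (forall m : 'X_{1..n}, m j = 0%N -> g@_m = 0) -> g = 0.
Proof.
move=> cj0 g_coef; apply: mpoly_eval_eq0 => z.
rewrite -(meval_line_invariant z (- z j / c j)) mevalE big1 // => m _.
have [/g_coef -> | mj0] := eqVneq (m j) 0%N; first by rewrite mul0r.
by rewrite (bigD1 j) //= divfK // subrr expr0n (negbTE mj0) mul0r mulr0.
Qed.

End TranslationInvariance.

Lemma homogeneous_system_nontrivial (R : fieldType) (I : finType) (A : {set I}) k
    (f : 'I_k -> I -> R) : (#|A| < k)%N ->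
  exists2 a : 'I_k -> R, exists r, a r != 0 &
    forall j, j \in A -> \sum_r a r * f r j = 0.
Proof.
move=> A_lt_k; pose M : 'M[R]_(k, #|A|) := \matrix_(r, l) f r (enum_val l).
have : kermx M != 0.
  rewrite kermx_eq0; apply: contraTN A_lt_k => /eqP M_free.
  by rewrite -leqNgt -M_free rank_leq_col.
case/rowV0Pn => v /sub_kermxP vM0 v_nz.
exists (fun r => v 0 r).
  apply/existsP; apply: contraNT v_nz => /existsPn v0.
  by apply/eqP/rowP => r; rewrite mxE; apply/eqP/negPn.
move=> j jA; have := congr1 (fun N : 'M_(1, #|A|) => N 0 (enum_rank_in jA j)) vM0.
rewrite !mxE => vMj; rewrite -[RHS]vMj; apply: eq_bigr => r _.
by rewrite mxE enum_rankK_in.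
Qed.

Definition mnm_ins0 n b (i : 'I_n.+1) (t : n.-tuple 'I_b) : 'X_{1..n.+1} :=
  [multinom if unlift i k is Some l then val (tnth t l) else 0%N | k < n.+1].

Lemma mnm_ins0_onto n d (i : 'I_n.+1) (m : 'X_{1..n.+1}) :
    m i = 0%N -> (mdeg m <= d)%N ->
  exists2 t, t \in [set t : n.-tuple 'I_d.+1 | (\sum_(x <- t) x <= d)%N] &
    mnm_ins0 i t = m.
Proof.
move=> mi0 m_le_d; pose t := [tuple (inord (m (lift i l)) : 'I_d.+1) | l < n].
have t_val l : val (tnth t l) = m (lift i l).
  rewrite tnth_mktuple /= inordK // ltnS (leq_trans _ m_le_d) // mdegE.
  by rewrite (bigD1 (lift i l)) //= leq_addr.
exists t.
  rewrite inE big_tuple; under eq_bigr => l _ do rewrite t_val.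
  by rewrite (leq_trans _ m_le_d) // mdegE (bigD1_ord i) //= mi0.
apply/mnmP => k; rewrite mnmE; case: unliftP => [l ->|->]; last by rewrite mi0.
by rewrite t_val.
Qed.

Lemma exists_comb_coef0_without_var (R : fieldType) n d k
    (g : 'I_k -> {mpoly R[n.+1]}) (i : 'I_n.+1) :
    (forall r, msize (g r) <= d.+1)%N -> ('C(n + d, n) < k)%N ->
  exists2 a : 'I_k -> R, exists r, a r != 0 &
    forall m : 'X_{1..n.+1}, m i = 0%N -> (\sum_r a r *: g r)@_m = 0.
Proof.
move=> g_size k_big; pose T := [set t : n.-tuple 'I_d.+1 | (\sum_(x <- t) x <= d)%N].
have [|a a_nz a_sol] :=
  homogeneous_system_nontrivial (A := T) (fun r t => (g r)@_(mnm_ins0 i t)).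
  by rewrite card_partial_ord_partitions.
exists a => // m mi0; rewrite raddf_sum /=.
have [m_le_d|m_gt_d] := leqP (mdeg m) d.
  have [t tT <-] := mnm_ins0_onto mi0 m_le_d.
  by rewrite -[RHS](a_sol t tT); apply: eq_bigr => r _; rewrite mcoeffZ.
apply: big1 => r _; rewrite mcoeffZ memN_msupp_eq0 ?mulr0 //.
by apply: msize_mdeg_ge; rewrite (leq_trans (g_size r)).
Qed.

Lemma bin_Pascal_subn n d : (0 < d)%N ->
  ('C(n.+1 + d, d) - 'C(n.+1 + d - 1, d - 1))%N = 'C(n + d, n).
Proof.
case: d => // d _; rewrite addSn binS subn1 /= subn1 /= addnK.
by rewrite -bin_sub ?leq_addl // addnK.
Qed.

Theorem lemma4p2 (n : nat) (c : 'I_n -> CC) (d : nat) (V : {mpoly CC[n]} -> Prop) :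
  (1 <= d)%N ->
  is_subspace V ->
  (forall g, V g -> Od d g) ->
  (forall g, V g -> transl_invariant c g) ->
  dim_ge V ('C(n + d, d) - 'C(n + d - 1, d - 1) + 1)%N ->
  forall i, c i = 0.
Proof.
move=> d_gt0 _ V_deg V_inv [g [Vg g_indep]].
case: n c V V_deg V_inv g Vg g_indep => [|n] c V V_deg V_inv g Vg g_indep i.
  by case: i.
apply/eqP; apply: contraT => ci_nz.
rewrite bin_Pascal_subn // addn1 in g Vg g_indep.
have [a [r ar_nz] comb_coef0] :=
  exists_comb_coef0_without_var i (fun r => V_deg _ (Vg r)) (ltnSn _).
have comb_inv : transl_invariant c (\sum_r a r *: g r).
  move=> z; rewrite !raddf_sum; apply: eq_bigr => r' _.
  by rewrite /= !mevalZ V_inv.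
have comb0 := translation_invariant_eq0 comb_inv ci_nz comb_coef0.
by rewrite (g_indep a comb0 r) eqxx in ar_nz.
Qed.
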